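(* Let $(X,Y)\sim\mathcal D$ with $Y\in[0,1]^d$, $f:\mathcal X\to[0,1]^d$ a forecaster, $\mathcal A$ a finite action set and $u(a,p)=r_a\cdot p+c_a$ with $r_a\in\mathbb R^d$, $c_a\in\mathbb R$; let $\mathrm{val}(p)=\max_{a\in\mathcal A}u(a,p)$ and $L:=\max_{a}\|r_a\|_2$. Let $\{B_j\}_{j=1}^J$ be a measurable partition of $[0,1]^d$, write $E_j=\{f(X)\in B_j\}$, $P_j=\mathbb P(E_j)>0$, $m_j=\mathbb E[f(X)\mid E_j]$. For $\varepsilon\ge0$ let $$\mathcal Q_\varepsilon=\Big\{q:[0,1]^d\to[0,1]^d:\ \big\|\mathbb E[\mathbf 1_{\{f(X)\in B_j\}}\{q(f(X))-f(X)\}]\big\|_2\le\varepsilon,\ j=1,\ldots,J\Big\}.$$ Then $$\sum_{j=1}^J P_j\,\mathrm{val}(m_j)-JL\varepsilon\ \le\ \min_{q\in\mathcal Q_\varepsilon}\mathbb E\big[\mathrm{val}(q(f(X)))\big]\ \le\ \sum_{j=1}^J P_j\,\mathrm{val}(m_j).$$ Moreover, there exists a worst-case (or arbitrarily near-worst-case) belief that is piecewise constant: for each $j$ one can take $q^\star_\varepsilon(v)=p_j^\star$ for $v\in B_j$ (a.e.), with $$p_j^\star\in\arg\min\{\mathrm{val}(p): p\in[0,1]^d,\ \|p-m_j\|_2\le\varepsilon/P_j\},$$ and the robust action on $B_j$ best-responds to $p_j^\star$, i.e. lies in $\arg\max_{a\in\mathcal A}u(a,p_j^\star)$.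
   Context: ''a.e.'' refers to the distribution of $f(X)$. Bins with $P_j=0$ are ignorable and are excluded. *)

(* Vectors of R^d are d.-tuple R,
   which carries the product (= Borel) sigma-algebra of MathComp-Analysis. *)
From HB Require Import structures.
From mathcomp Require Import all_boot all_order all_algebra.
From mathcomp Require Import all_classical all_reals all_analysis.
Set Implicit Arguments. Unset Strict Implicit. Unset Printing Implicit Defensive.
Import Order.TTheory GRing.Theory Num.Theory.
Local Open Scope classical_set_scope.
Local Open Scope ring_scope.

Section Defs.
Context {R : realType} {d : nat}.

Definition cube : set (d.-tuple R) := [set v | forall i : 'I_d, 0 <= tnth v i <= 1].

Definition vsub (p q : d.-tuple R) : d.-tuple R := [tuple tnth p i - tnth q i | i < d].

Definition dot (p q : d.-tuple R) : R := \sum_(i < d) tnth p i * tnth q i.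
Definition norm2 (p : d.-tuple R) : R := Num.sqrt (\sum_(i < d) tnth p i ^+ 2).

(* expectation of a real random variable (all r.v.'s used below are bounded
   and measurable, hence integrable) *)
Definition Ex {dO} {O : measurableType dO} (P : probability O R) (g : O -> R) : R :=
  fine (\int[P]_w (g w)%:E).

Definition Evec {dO} {O : measurableType dO} (P : probability O R)
  (g : O -> d.-tuple R) : d.-tuple R := [tuple Ex P (fun w => tnth (g w) i) | i < d].

Definition util {A : finType} (r : A -> d.-tuple R) (c : A -> R) (a : A) (p : d.-tuple R) : R :=
  dot (r a) p + c a.

(* val(p) = max_a u(a,p)  (A is nonempty, witnessed by a0) *)
Definition pval {A : finType} (a0 : A) (r : A -> d.-tuple R) (c : A -> R) (p : d.-tuple R) : R :=
  \big[Num.max/util r c a0 p]_(a : A) util r c a p.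

Definition Lconst {A : finType} (r : A -> d.-tuple R) : R :=
  \big[Num.max/0]_(a : A) norm2 (r a).

Definition binprob {dO} {O : measurableType dO} (P : probability O R)
  (V : O -> d.-tuple R) (B : set (d.-tuple R)) : R := fine (P (V @^-1` B)).

Definition binmean {dO} {O : measurableType dO} (P : probability O R)
  (V : O -> d.-tuple R) (B : set (d.-tuple R)) : d.-tuple R :=
  [tuple (binprob P V B)^-1 * Ex P (fun w => \1_B (V w) * tnth (V w) i) | i < d].

Definition Qset {dO} {O : measurableType dO} (P : probability O R)
  (V : O -> d.-tuple R) {J : nat} (B : 'I_J -> set (d.-tuple R)) (eps : R)
  (q : d.-tuple R -> d.-tuple R) : Prop :=
  [/\ measurable_fun cube q,
      (forall v, cube v -> cube (q v)) &
      forall j : 'I_J,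
        norm2 (Evec P (fun w => [tuple \1_(B j) (V w) * tnth (vsub (q (V w)) (V w)) i | i < d]))
        <= eps].

End Defs.

Section Defs2.
Context {R : realType} {d : nat}.
Definition is_worst_belief {A : finType} (a0 : A) (r : A -> d.-tuple R) (c : A -> R)
  (m : d.-tuple R) (rad : R) (p : d.-tuple R) : Prop :=
  [/\ cube p, norm2 (vsub p m) <= rad &
      forall p', cube p' -> norm2 (vsub p' m) <= rad -> pval a0 r c p <= pval a0 r c p'].
End Defs2.

From HB Require Import structures.
From mathcomp Require Import all_boot all_order all_algebra.
From mathcomp Require Import all_classical all_reals all_analysis.
From mathcomp Require Import measurable_realfun.
From mathcomp Require Import ring.
Import Order.TTheory GRing.Theory Num.Theory.
Import numFieldNormedType.Exports.
Local Open Scope classical_set_scope.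
Local Open Scope ring_scope.
Set Implicit Arguments. Unset Strict Implicit. Unset Printing Implicit Defensive.

(* Since val is a maximum of affine maps, averaging a belief map q over a bin
   can only lower the expected value: for the best response a to the bin
   average g_j of q(f(X)), E[1_{E_j} val(q(f(X)))] >= E[1_{E_j} u(a, q(f(X)))]
   = P_j u(a, g_j) = P_j val(g_j).  The constraint defining Q_eps says exactly
   that ||g_j - m_j|| <= eps / P_j, so the belief map that is constant equal to
   a minimiser p_j* of val on [0,1]^d /\ B(m_j, eps / P_j) on each bin is
   optimal; such minimisers exist by compactness.  The upper bound holds since
   m_j is itself feasible, the lower one since val is L-Lipschitz. *)

Section BoundedExpectation.
Context {R : realType} {dO : measure_display} {O : measurableType dO}.
Context (P : probability O R).
Implicit Types (g h : O -> R).

Definition bounded_measurable g :=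
  measurable_fun setT g /\ exists M : R, forall w, `|g w| <= M.

Lemma bounded_measurable_integrable g :
  bounded_measurable g -> P.-integrable setT (EFin \o g).
Proof.
move=> [mg [M gM]]; apply/integrableP; split; first exact/measurable_EFinP.
apply: le_lt_trans.
  apply: (integral_le_bound `|M|%:E) => //.
    by apply: measurableT_comp => //; exact/measurable_EFinP.
  by apply: aeW => w _; rewrite /= lee_fin (le_trans (gM w)) ?ler_norm.
apply: lte_mul_pinfty => //.
by apply: (le_lt_trans (probability_le1 P _)) => //; rewrite ltry.
Qed.

Lemma bounded_measurable_cst k : bounded_measurable (fun=> k).
Proof. by split => //; exists `|k|. Qed.

Lemma bounded_measurableD g h : bounded_measurable g -> bounded_measurable h ->
  bounded_measurable (fun w => g w + h w).
Proof.
move=> [mg [M gM]] [mh [N hN]]; split; first exact: measurable_funD.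
by exists (M + N) => w; rewrite (le_trans (ler_normD _ _)) ?lerD.
Qed.

Lemma bounded_measurableM g h : bounded_measurable g -> bounded_measurable h ->
  bounded_measurable (fun w => g w * h w).
Proof.
move=> [mg [M gM]] [mh [N hN]]; split; first exact: measurable_funM.
by exists (M * N) => w; rewrite normrM ler_pM.
Qed.

Lemma bounded_measurable_max g h : bounded_measurable g -> bounded_measurable h ->
  bounded_measurable (fun w => Num.max (g w) (h w)).
Proof.
move=> [mg [M gM]] [mh [N hN]]; split; first exact: measurable_maxr.
exists (Num.max M N) => w.
by case: (leP (g w) (h w)) => _; rewrite le_max ?gM ?hN ?orbT.
Qed.

Lemma bounded_measurable_sum (I : Type) (s : seq I) (F : I -> O -> R) :
  (forall i, bounded_measurable (F i)) ->
  bounded_measurable (fun w => \sum_(i <- s) F i w).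
Proof.
move=> hF; elim: s => [|i s IH].
  by under eq_fun do rewrite big_nil; exact: bounded_measurable_cst.
by under eq_fun do rewrite big_cons; exact: bounded_measurableD.
Qed.

Lemma Ex_cst k : Ex P (fun=> k) = k.
Proof.
rewrite /Ex -/(Rintegral P setT _) Rintegral_cst // -[RHS]mulr1.
by congr (_ * _); exact: (congr1 fine (probability_setT P)).
Qed.

Lemma Ex_indic A : measurable A -> Ex P (\1_A) = fine (P A).
Proof. by move=> mA; rewrite /Ex integral_indic // setIT. Qed.

Lemma ExD g h : bounded_measurable g -> bounded_measurable h ->
  Ex P (fun w => g w + h w) = Ex P g + Ex P h.
Proof.
by move=> bg bh; apply: RintegralD => //; exact: bounded_measurable_integrable.
Qed.

Lemma ExB g h : bounded_measurable g -> bounded_measurable h ->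
  Ex P (fun w => g w - h w) = Ex P g - Ex P h.
Proof.
by move=> bg bh; apply: RintegralB => //; exact: bounded_measurable_integrable.
Qed.

Lemma ExZl k g : bounded_measurable g -> Ex P (fun w => k * g w) = k * Ex P g.
Proof.
by move=> bg; apply: RintegralZl => //; exact: bounded_measurable_integrable.
Qed.

Lemma ler_Ex g h : bounded_measurable g -> bounded_measurable h ->
  (forall w, g w <= h w) -> Ex P g <= Ex P h.
Proof.
by move=> bg bh gh; apply: le_Rintegral => //; exact: bounded_measurable_integrable.
Qed.

Lemma Ex_sum (I : Type) (s : seq I) (F : I -> O -> R) :
  (forall i, bounded_measurable (F i)) ->
  Ex P (fun w => \sum_(i <- s) F i w) = \sum_(i <- s) Ex P (F i).
Proof.
move=> hF; elim: s => [|i s IH].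
  by under eq_fun do rewrite big_nil; rewrite big_nil Ex_cst.
under eq_fun do rewrite big_cons.
by rewrite big_cons ExD ?IH //; exact: bounded_measurable_sum.
Qed.

End BoundedExpectation.

Section CubeValued.
Context {R : realType} {d : nat} {dO : measure_display} {O : measurableType dO}.
Implicit Types W : O -> d.-tuple R.

Definition cube_valued W := measurable_fun setT W /\ forall w, cube (W w).

Lemma measurable_cube : measurable (@cube R d).
Proof.
have -> : @cube R d =
    \bigcap_(i in [set: 'I_d]) ((fun v : d.-tuple R => tnth v i) @^-1` `[0, 1]%classic).
  apply/seteqP; split => v /= hv i; first by move=> _ /=; rewrite in_itv /= hv.
  by have := hv i I; rewrite /= in_itv.
apply: fin_bigcap_measurable; first exact: finite_finset.
by move=> i _; rewrite -[X in measurable X]setTI; exact: measurable_tnth.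
Qed.

Lemma cube_valued_comp (q : d.-tuple R -> d.-tuple R) W :
  measurable_fun cube q -> (forall v, cube v -> cube (q v)) -> cube_valued W ->
  cube_valued (q \o W).
Proof.
move=> mq qcube [mW Wcube]; split; last by move=> w; exact/qcube/Wcube.
apply: (measurable_comp measurable_cube _ mq mW).
by move=> _ [w _ <-]; exact: Wcube.
Qed.

Lemma bounded_measurable_tnth W i : cube_valued W ->
  bounded_measurable (fun w => tnth (W w) i).
Proof.
move=> [mW Wcube]; split.
  apply: (measurableT_comp (f := fun v : d.-tuple R => tnth v i)) => //.
  exact: measurable_tnth.
by exists 1 => w; have /andP[W0 W1] := Wcube w i; rewrite ger0_norm.
Qed.

Lemma bounded_measurable_indic (B : set (d.-tuple R)) W :
  measurable B -> measurable_fun setT W -> bounded_measurable (fun w => \1_B (W w) : R).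
Proof.
move=> mB mW; split; first by apply: measurableT_comp => //; exact: measurable_indic.
by exists 1 => w; rewrite /indic; case: (_ \in _); rewrite ?normr1 ?normr0.
Qed.

Context {A : finType} (a0 : A) (r : A -> d.-tuple R) (c : A -> R).

Lemma bounded_measurable_util a W : cube_valued W ->
  bounded_measurable (fun w => util r c a (W w)).
Proof.
move=> cW; apply: bounded_measurableD; last exact: bounded_measurable_cst.
apply: bounded_measurable_sum => i; apply: bounded_measurableM.
  exact: bounded_measurable_cst.
exact: bounded_measurable_tnth.
Qed.

Lemma bounded_measurable_pval W : cube_valued W ->
  bounded_measurable (fun w => pval a0 r c (W w)).
Proof.
move=> cW; rewrite /pval; elim: (index_enum A) => [|a s IH].
  by under eq_fun do rewrite big_nil; exact: bounded_measurable_util.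
under eq_fun do rewrite big_cons.
exact: bounded_measurable_max (bounded_measurable_util _ cW) IH.
Qed.

End CubeValued.

Section InnerProduct.
Context {R : realType} {d : nat}.
Implicit Types p q : d.-tuple R.

(* Lagrange's identity: the defect in Cauchy-Schwarz is half a sum of squares. *)
Lemma cauchy_schwarz (x y : 'I_d -> R) :
  (\sum_i x i * y i) ^+ 2 <= (\sum_i x i ^+ 2) * (\sum_i y i ^+ 2).
Proof.
have E1 : (\sum_i x i ^+ 2) * (\sum_i y i ^+ 2) = \sum_i \sum_j (x i * y j) ^+ 2.
  rewrite mulr_suml; apply: eq_bigr => i _; rewrite mulr_sumr.
  by apply: eq_bigr => j _; rewrite exprMn.
have E2 : (\sum_i x i ^+ 2) * (\sum_i y i ^+ 2) = \sum_i \sum_j (x j * y i) ^+ 2.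
  rewrite mulrC mulr_suml; apply: eq_bigr => i _; rewrite mulr_sumr.
  by apply: eq_bigr => j _; rewrite exprMn mulrC.
have E3 : (\sum_i x i * y i) ^+ 2 = \sum_i \sum_j (x i * y j) * (x j * y i).
  rewrite expr2 mulr_suml; apply: eq_bigr => i _; rewrite mulr_sumr.
  by apply: eq_bigr => j _; ring.
have lagrange : \sum_i \sum_j (x i * y j - x j * y i) ^+ 2 =
    ((\sum_i x i ^+ 2) * (\sum_i y i ^+ 2) - (\sum_i x i * y i) ^+ 2) *+ 2.
  rewrite mulr2n {1}E1 E2 E3 -!sumrB -big_split /=; apply: eq_bigr => i _.
  rewrite -!sumrB -big_split /=; apply: eq_bigr => j _.
  by rewrite sqrrB; ring.
have : 0 <= \sum_i \sum_j (x i * y j - x j * y i) ^+ 2.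
  by apply: sumr_ge0 => i _; apply: sumr_ge0 => j _; exact: sqr_ge0.
by rewrite lagrange pmulrn_lge0 // subr_ge0.
Qed.

Lemma norm2_ge0 p : 0 <= norm2 p.
Proof. exact: sqrtr_ge0. Qed.

Lemma dot_le_norm2 p q : dot p q <= norm2 p * norm2 q.
Proof.
rewrite /norm2 -sqrtrM; last by apply: sumr_ge0 => i _; exact: sqr_ge0.
rewrite (le_trans (ler_norm _)) // -(sqrtr_sqr (dot p q)).
exact/ler_wsqrtr/cauchy_schwarz.
Qed.

Lemma tnth_vsub p q i : tnth (vsub p q) i = tnth p i - tnth q i.
Proof. by rewrite tnth_mktuple. Qed.

Lemma dot_vsubr x p q : dot x (vsub p q) = dot x p - dot x q.
Proof. by rewrite /dot -sumrB; apply: eq_bigr => i _; rewrite tnth_vsub mulrBr. Qed.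

Lemma norm2_vsubC p q : norm2 (vsub p q) = norm2 (vsub q p).
Proof.
by congr Num.sqrt; apply: eq_bigr => i _; rewrite !tnth_vsub -sqrrN opprB.
Qed.

Lemma norm2_vsubxx p : norm2 (vsub p p) = 0.
Proof. by rewrite /norm2 big1 ?sqrtr0 // => i _; rewrite tnth_vsub subrr expr0n. Qed.

Lemma norm2_scale (k : R) p : norm2 [tuple k * tnth p i | i < d] = `|k| * norm2 p.
Proof.
rewrite /norm2 -sqrtr_sqr -sqrtrM ?sqr_ge0 //; congr Num.sqrt.
by rewrite mulr_sumr; apply: eq_bigr => i _; rewrite tnth_mktuple exprMn.
Qed.

End InnerProduct.

Section Value.
Context {R : realType} {d : nat} {A : finType}.
Context (a0 : A) (r : A -> d.-tuple R) (c : A -> R).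
Implicit Types m p : d.-tuple R.

Lemma util_le_pval a p : util r c a p <= pval a0 r c p.
Proof. exact: le_bigmax. Qed.

Lemma pval_attained p : exists a, pval a0 r c p = util r c a p.
Proof.
apply: (big_ind (fun v => exists a, v = util r c a p)); first by exists a0.
- move=> _ _ [a ->] [b ->].
  by case: (leP (util r c a p) (util r c b p)) => _; [exists b | exists a].
- by move=> a _; exists a.
Qed.

Lemma exists_best_response p : exists a, forall b, util r c b p <= util r c a p.
Proof.
by have [a pa] := pval_attained p; exists a => b; rewrite -pa util_le_pval.
Qed.

Lemma norm2_le_Lconst a : norm2 (r a) <= Lconst r.
Proof. exact: le_bigmax. Qed.

Lemma pval_lipschitz m p : pval a0 r c m - pval a0 r c p <= Lconst r * norm2 (vsub p m).
Proof.
have [a ->] := pval_attained m.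
apply: le_trans (lerB (lexx _) (util_le_pval a p)) _.
rewrite /util opprD addrACA subrr addr0 -dot_vsubr norm2_vsubC.
apply: le_trans (dot_le_norm2 _ _) _.
by apply: ler_wpM2r; [exact: norm2_ge0 | exact: norm2_le_Lconst].
Qed.

Lemma worst_belief_le_center m rad p : cube m -> 0 <= rad ->
  is_worst_belief a0 r c m rad p -> pval a0 r c p <= pval a0 r c m.
Proof. by move=> cm rad0 [_ _ pmin]; apply: pmin; rewrite ?norm2_vsubxx. Qed.

Lemma worst_belief_ge_center m rad p : is_worst_belief a0 r c m rad p ->
  pval a0 r c m - Lconst r * rad <= pval a0 r c p.
Proof.
move=> [_ pm _]; rewrite lerBlDr addrC -lerBlDr.
have L0 : 0 <= Lconst r := le_trans (norm2_ge0 _) (norm2_le_Lconst a0).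
exact: le_trans (pval_lipschitz m p) (ler_wpM2l L0 pm).
Qed.

End Value.

Section WorstBelief.
Context {R : realType} {d : nat} {A : finType}.
Context (a0 : A) (r : A -> d.-tuple R) (c : A -> R).

(* Tuples carry no topology; compactness is argued on row vectors. *)
Let tuple_of_row (v : 'rV[R]_d) : d.-tuple R := [tuple v ord0 i | i < d].
Let row_of_tuple (p : d.-tuple R) : 'rV[R]_d := \row_i tnth p i.

Let row_of_tupleK p : tuple_of_row (row_of_tuple p) = p.
Proof. by apply: eq_from_tnth => i; rewrite tnth_mktuple mxE. Qed.

Let continuous_sum (I : Type) (s : seq I) (F : I -> 'rV[R]_d -> R) :
  (forall i, continuous (F i)) -> continuous (fun v => \sum_(i <- s) F i v).
Proof.
move=> Fcont; elim: s => [|i s IH].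
  by under eq_fun do rewrite big_nil; exact: cst_continuous.
under eq_fun do rewrite big_cons.
by move=> v; apply: continuousD; [exact: Fcont | exact: IH].
Qed.

Let continuous_coord i : continuous (fun v => tnth (tuple_of_row v) i).
Proof. by under eq_fun do rewrite tnth_mktuple; exact: coord_continuous. Qed.

Let continuous_util a : continuous (fun v => util r c a (tuple_of_row v)).
Proof.
move=> v; apply: continuousD; last exact: cst_continuous.
apply: continuous_sum => i w.
apply: (continuousM (s := cst (tnth (r a) i)) (t := fun v => tnth (tuple_of_row v) i)).
  exact: cst_continuous.
exact: continuous_coord.
Qed.

Let continuous_pval : continuous (fun v => pval a0 r c (tuple_of_row v)).
Proof.
rewrite /pval; elim: (index_enum A) => [|a s IH].
  by under eq_fun do rewrite big_nil; exact: continuous_util.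
under eq_fun do rewrite big_cons.
move=> v; apply: (continuous_max (f := fun v => util r c a (tuple_of_row v))
  (g := fun v => \big[Num.max/util r c a0 (tuple_of_row v)]_(b <- s)
                   util r c b (tuple_of_row v))).
  exact: continuous_util.
exact: IH.
Qed.

Let continuous_dist m : continuous (fun v => norm2 (vsub (tuple_of_row v) m)).
Proof.
move=> v; apply: (continuous_comp (g := Num.sqrt)
  (f := fun v => \sum_(i < d) tnth (vsub (tuple_of_row v) m) i ^+ 2)).
  apply: continuous_sum => i w; under eq_fun do rewrite tnth_vsub expr2.
  have diff_cont : continuous (fun v => tnth (tuple_of_row v) i - tnth m i).
    move=> u; apply: (continuousB (f := fun v => tnth (tuple_of_row v) i)).
      exact: continuous_coord.
    exact: cst_continuous.
  exact: continuousM (diff_cont w) (diff_cont w).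
exact: sqrt_continuous.
Qed.

Lemma exists_worst_belief m rad : cube m -> 0 <= rad ->
  exists p, is_worst_belief a0 r c m rad p.
Proof.
move=> cm rad0.
pose S := [set v : 'rV[R]_d | forall i, `[0, 1]%classic (v ord0 i)] `&`
          (fun v => norm2 (vsub (tuple_of_row v) m)) @^-1` [set x | x <= rad].
have S0 : S !=set0.
  exists (row_of_tuple m); split => /=; last by rewrite row_of_tupleK norm2_vsubxx.
  by move=> i; rewrite mxE in_itv /=; exact: cm.
have Scompact : compact S.
  apply: compact_closedI; first exact: rV_compact (fun=> @segment_compact R 0 1).
  by apply: (continuous_closedP _).1; [exact: continuous_dist | exact: closed_le].
have [v /[1!inE] -[vcube vm] vmin] :=
  EVT_min_rV S0 Scompact (continuous_subspaceT continuous_pval).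
exists (tuple_of_row v); split => //.
  by move=> i; rewrite tnth_mktuple; have := vcube i; rewrite /= in_itv.
move=> p pcube pm; rewrite -(row_of_tupleK p); apply: vmin; rewrite inE.
by split => [i|] /=; rewrite ?row_of_tupleK // mxE in_itv /=; exact: pcube.
Qed.

End WorstBelief.

Section Bins.
Context {R : realType} {d : nat} {dO : measure_display} {O : measurableType dO}.
Context (P : probability O R) (V : O -> d.-tuple R) (V_cube : cube_valued V).
Context {J : nat} (B : 'I_J -> set (d.-tuple R)) (mB : forall j, measurable (B j)).
Hypothesis disjB : forall i j : 'I_J, i != j -> B i `&` B j = set0.
Hypothesis covB : forall v, cube v <-> exists j, B j v.
Hypothesis Ppos : forall j, 0 < binprob P V (B j).
Context {A : finType} (a0 : A) (r : A -> d.-tuple R) (c : A -> R).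

Let ind j w : R := \1_(B j) (V w).
Let Pj j := binprob P V (B j).
Let Pj_gt0 j : 0 < Pj j. Proof. exact: Ppos. Qed.
Let Pj_neq0 j : Pj j != 0. Proof. exact: lt0r_neq0. Qed.

Definition bin_average (W : O -> d.-tuple R) j : d.-tuple R :=
  [tuple (Pj j)^-1 * Ex P (fun w => ind j w * tnth (W w) i) | i < d].

Lemma binmean_bin_average j : binmean P V (B j) = bin_average V j.
Proof. by []. Qed.

Lemma bounded_measurable_ind j : bounded_measurable (ind j).
Proof. exact: bounded_measurable_indic (mB j) V_cube.1. Qed.

Lemma bounded_measurable_indM j g : bounded_measurable g ->
  bounded_measurable (fun w => ind j w * g w).
Proof. exact: bounded_measurableM (bounded_measurable_ind j). Qed.

Lemma ind_ge0 j w : 0 <= ind j w.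
Proof. by rewrite /ind /indic; case: (_ \in _). Qed.

Lemma ind_mul_bin_cst (F : d.-tuple R -> R) W j p w :
  (forall w, B j (V w) -> W w = p) -> ind j w * F (W w) = ind j w * F p.
Proof.
move=> Wp; rewrite /ind /indic.
by case: (boolP (V w \in B j)) => [/set_mem/Wp -> | _]; rewrite ?mul0r.
Qed.

Lemma binprobE j : Pj j = Ex P (ind j).
Proof.
rewrite /Pj /binprob -Ex_indic //.
by rewrite -[X in measurable X]setTI; exact: V_cube.1.
Qed.

Lemma Ex_ind_cst j k : Ex P (fun w => ind j w * k) = k * Pj j.
Proof.
rewrite binprobE -ExZl; last exact: bounded_measurable_ind.
by congr Ex; apply: funext => w; rewrite mulrC.
Qed.

Lemma sum_indic_bin (h : 'I_J -> R) j0 v : B j0 v -> \sum_j \1_(B j) v * h j = h j0.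
Proof.
move=> vj0; rewrite (bigD1 j0) //= big1 ?addr0; first by rewrite indicE mem_set ?mul1r.
move=> j /disjB/seteqP[/(_ v) + _] /=; rewrite indicE.
by case: (boolP (v \in B j)) => [/set_mem vj /(_ (conj vj vj0)) | _ _]; rewrite ?mul0r.
Qed.

Lemma Ex_bin_decomposition g : bounded_measurable g ->
  Ex P g = \sum_j Ex P (fun w => ind j w * g w).
Proof.
move=> bg; rewrite -Ex_sum; last by move=> j; exact: bounded_measurable_indM.
congr Ex; apply: funext => w; have [j0 Vj0] := (covB (V w)).1 (V_cube.2 w).
by rewrite (sum_indic_bin (fun=> g w) Vj0).
Qed.

Lemma Ex_ind_tnth W j i :
  Ex P (fun w => ind j w * tnth (W w) i) = Pj j * tnth (bin_average W j) i.
Proof. by rewrite tnth_mktuple mulrA mulfV ?mul1r. Qed.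

Lemma bin_average_cube W j : cube_valued W -> cube (bin_average W j).
Proof.
move=> W_cube i; have P0 := Pj_gt0 j.
have bW := bounded_measurable_indM j (bounded_measurable_tnth i W_cube).
have Wi0 w : 0 <= tnth (W w) i by have /andP[] := W_cube.2 w i.
have Wi1 w : tnth (W w) i <= 1 by have /andP[] := W_cube.2 w i.
have ge0 : 0 <= Ex P (fun w => ind j w * tnth (W w) i).
  rewrite -(Ex_cst P 0); apply: ler_Ex => //; first exact: bounded_measurable_cst.
  by move=> w; rewrite mulr_ge0 ?ind_ge0.
have le1 : Ex P (fun w => ind j w * tnth (W w) i) <= Pj j.
  rewrite binprobE; apply: ler_Ex => //; first exact: bounded_measurable_ind.
  by move=> w; rewrite ler_piMr ?ind_ge0.
rewrite Ex_ind_tnth in ge0 le1.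
by rewrite -(pmulr_rge0 _ P0) ge0 /= -(ler_pM2l P0) mulr1.
Qed.

Lemma bin_average_cst W j p : (forall w, B j (V w) -> W w = p) -> bin_average W j = p.
Proof.
move=> Wp; apply: eq_from_tnth => i; rewrite tnth_mktuple.
under eq_fun do rewrite (ind_mul_bin_cst (fun v => tnth v i) _ Wp).
by rewrite Ex_ind_cst mulrCA mulVf ?mulr1.
Qed.

Lemma Ex_ind_util W j a : cube_valued W ->
  Ex P (fun w => ind j w * util r c a (W w)) = Pj j * util r c a (bin_average W j).
Proof.
move=> W_cube.
have bW i := bounded_measurable_indM j (bounded_measurable_tnth i W_cube).
have brW i : bounded_measurable (fun w => tnth (r a) i * (ind j w * tnth (W w) i)).
  exact: bounded_measurableM (bounded_measurable_cst _) (bW i).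
have -> : (fun w => ind j w * util r c a (W w)) =
    (fun w => \sum_i tnth (r a) i * (ind j w * tnth (W w) i) + ind j w * c a).
  apply: funext => w; rewrite /util /dot mulrDr mulr_sumr; congr (_ + _).
  by apply: eq_bigr => i _; rewrite mulrCA.
rewrite ExD; first last.
- exact: bounded_measurable_indM (bounded_measurable_cst _).
- exact: bounded_measurable_sum.
rewrite Ex_sum //.
rewrite Ex_ind_cst /util /dot mulrDr mulr_sumr [c a * _]mulrC; congr (_ + _).
by apply: eq_bigr => i _; rewrite ExZl // Ex_ind_tnth mulrCA.
Qed.

Lemma pval_bin_average_le W j : cube_valued W ->
  Pj j * pval a0 r c (bin_average W j) <= Ex P (fun w => ind j w * pval a0 r c (W w)).
Proof.
move=> W_cube; have [a ->] := pval_attained a0 r c (bin_average W j).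
rewrite -Ex_ind_util //; apply: ler_Ex.
- exact: bounded_measurable_indM (bounded_measurable_util r c a W_cube).
- exact: bounded_measurable_indM (bounded_measurable_pval a0 r c W_cube).
- by move=> w; apply: ler_wpM2l; [exact: ind_ge0 | exact: util_le_pval].
Qed.

Lemma bin_gap_le eps q j : cube_valued (q \o V) ->
  (norm2 (Evec P (fun w =>
     [tuple \1_(B j) (V w) * tnth (vsub (q (V w)) (V w)) i | i < d])) <= eps) =
  (norm2 (vsub (bin_average (q \o V) j) (binmean P V (B j))) <= eps / Pj j).
Proof.
move=> qV_cube; have P0 := Pj_gt0 j.
have -> : Evec P (fun w =>
      [tuple \1_(B j) (V w) * tnth (vsub (q (V w)) (V w)) i | i < d]) =
    [tuple Pj j * tnth (vsub (bin_average (q \o V) j) (binmean P V (B j))) i | i < d].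
  apply: eq_from_tnth => i.
  rewrite tnth_mktuple [RHS]tnth_mktuple tnth_vsub mulrBr binmean_bin_average.
  rewrite -!Ex_ind_tnth -ExB; first last.
  - exact: bounded_measurable_indM (bounded_measurable_tnth i V_cube).
  - exact: bounded_measurable_indM (bounded_measurable_tnth i qV_cube).
  by congr Ex; apply: funext => w; rewrite !tnth_mktuple mulrBr.
by rewrite norm2_scale (ger0_norm (ltW P0)) ler_pdivlMr // mulrC.
Qed.

Lemma measurable_bin_cst (ps : 'I_J -> d.-tuple R) (qs : d.-tuple R -> d.-tuple R) :
  (forall j v, B j v -> qs v = ps j) -> measurable_fun cube qs.
Proof.
move=> qs_bins _ Y _.
rewrite (_ : cube `&` qs @^-1` Y = \bigcup_(j in [set j | Y (ps j)]) B j).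
  by apply: fin_bigcup_measurable => // *; exact: finite_finset.
apply/seteqP; split => v.
  by move=> [/covB[j vj] Yv]; exists j => //=; rewrite -(qs_bins _ _ vj).
move=> [j /= Yj vj]; split; first by apply/covB; exists j.
by rewrite /preimage /= (qs_bins _ _ vj).
Qed.

Section BinwiseWorst.
Variables (eps : R) (ps : 'I_J -> d.-tuple R) (qs : d.-tuple R -> d.-tuple R).
Hypothesis ps_worst :
  forall j, is_worst_belief a0 r c (binmean P V (B j)) (eps / Pj j) (ps j).
Hypothesis qs_bins : forall j v, B j v -> qs v = ps j.

Let qs_cube v : cube v -> cube (qs v).
Proof. by move=> /covB[j /qs_bins ->]; case: (ps_worst j). Qed.

Let qsV_cube : cube_valued (qs \o V).
Proof. exact: cube_valued_comp (measurable_bin_cst qs_bins) qs_cube V_cube. Qed.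

Lemma Qset_binwise_worst : Qset P V B eps qs.
Proof.
split=> [||j]; [exact: measurable_bin_cst qs_bins | exact: qs_cube |].
rewrite bin_gap_le // (@bin_average_cst _ _ (ps j)) => [|w /qs_bins //].
by case: (ps_worst j).
Qed.

Lemma Ex_pval_binwise :
  Ex P (fun w => pval a0 r c (qs (V w))) = \sum_j Pj j * pval a0 r c (ps j).
Proof.
rewrite (Ex_bin_decomposition (bounded_measurable_pval a0 r c qsV_cube)).
apply: eq_bigr => j _; have qsV_bin w : B j (V w) -> qs (V w) = ps j by exact: qs_bins.
under eq_fun do rewrite (ind_mul_bin_cst (pval a0 r c) _ qsV_bin).
by rewrite Ex_ind_cst mulrC.
Qed.

Lemma binwise_worst_min q : Qset P V B eps q ->
  Ex P (fun w => pval a0 r c (qs (V w))) <= Ex P (fun w => pval a0 r c (q (V w))).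
Proof.
move=> [mq q_cube q_gap]; have qV_cube := cube_valued_comp mq q_cube V_cube.
rewrite Ex_pval_binwise (Ex_bin_decomposition (bounded_measurable_pval a0 r c qV_cube)).
apply: ler_sum => j _; apply: le_trans _ (pval_bin_average_le j qV_cube).
rewrite ler_pM2l //; have [_ _ ps_min] := ps_worst j.
by apply: ps_min; [exact: bin_average_cube | rewrite -bin_gap_le].
Qed.

Lemma sum_binwise_worst_le : 0 <= eps ->
  \sum_j Pj j * pval a0 r c (ps j) <= \sum_j Pj j * pval a0 r c (binmean P V (B j)).
Proof.
move=> eps0; apply: ler_sum => j _; rewrite ler_pM2l //.
apply: worst_belief_le_center (ps_worst j); first exact: bin_average_cube.
by rewrite divr_ge0 // ltW.
Qed.

Lemma sum_binwise_worst_ge :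
  \sum_j Pj j * pval a0 r c (binmean P V (B j)) - J%:R * Lconst r * eps
  <= \sum_j Pj j * pval a0 r c (ps j).
Proof.
have -> : J%:R * Lconst r * eps = \sum_(j < J) Lconst r * eps.
  by rewrite sumr_const card_ord -mulrA mulr_natl.
rewrite -sumrB; apply: ler_sum => j _; have P0 := Pj_gt0 j.
have := ler_wpM2l (ltW P0) (worst_belief_ge_center (ps_worst j)).
rewrite mulrBr (_ : Pj j * (Lconst r * (eps / Pj j)) = Lconst r * eps) //.
by field.
Qed.

End BinwiseWorst.
End Bins.

Theorem proposition3
  (R : realType) (d : nat)
  (dO : measure_display) (Omega : measurableType dO) (P : probability Omega R)
  (dX : measure_display) (Xsp : measurableType dX)
  (X : Omega -> Xsp) (Y : Omega -> d.-tuple R) (f : Xsp -> d.-tuple R)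
  (mX : measurable_fun setT X) (mY : measurable_fun setT Y)
  (Ycube : forall w, cube (Y w))
  (mf : measurable_fun setT f) (fcube : forall x, cube (f x))
  (A : finType) (a0 : A) (r : A -> d.-tuple R) (c : A -> R)
  (J : nat) (B : 'I_J -> set (d.-tuple R))
  (mB : forall j, measurable (B j))
  (disjB : forall i j : 'I_J, i != j -> B i `&` B j = set0)
  (covB : forall v, cube v <-> exists j, B j v)
  (Ppos : forall j, 0 < binprob P (f \o X) (B j))
  (eps : R) (heps : 0 <= eps) :
  (forall j : 'I_J, exists p,
      is_worst_belief a0 r c (binmean P (f \o X) (B j)) (eps / binprob P (f \o X) (B j)) p)
  /\
  (forall (ps : 'I_J -> d.-tuple R) (qs : d.-tuple R -> d.-tuple R),
      (forall j, is_worst_belief a0 r c (binmean P (f \o X) (B j))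
                   (eps / binprob P (f \o X) (B j)) (ps j)) ->
      (forall j v, B j v -> qs v = ps j) ->
      [/\ Qset P (f \o X) B eps qs,
          (forall q : d.-tuple R -> d.-tuple R, Qset P (f \o X) B eps q ->
             Ex P (fun w => pval a0 r c (qs (f (X w))))
             <= Ex P (fun w => pval a0 r c (q (f (X w))))),
          \sum_(j < J) binprob P (f \o X) (B j) * pval a0 r c (binmean P (f \o X) (B j))
            - J%:R * Lconst r * eps
          <= Ex P (fun w => pval a0 r c (qs (f (X w)))),
          Ex P (fun w => pval a0 r c (qs (f (X w))))
          <= \sum_(j < J) binprob P (f \o X) (B j) * pval a0 r c (binmean P (f \o X) (B j))
        & forall j, exists a : A, forall b : A, util r c b (ps j) <= util r c a (ps j)]).
Proof.
have V_cube : cube_valued (f \o X).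
  by split => [|w]; [exact: measurableT_comp | exact: fcube].
have rad_ge0 j : 0 <= eps / binprob P (f \o X) (B j) by rewrite divr_ge0 // ltW.
split => [j | ps qs ps_worst qs_bins].
  by apply: exists_worst_belief => //; exact: bin_average_cube.
have val_qs := Ex_pval_binwise V_cube mB disjB covB ps_worst qs_bins.
split.
- exact: Qset_binwise_worst.
- exact: binwise_worst_min.
- by rewrite val_qs; exact: sum_binwise_worst_ge.
- by rewrite val_qs; exact: sum_binwise_worst_le.
- by move=> j; exact: exists_best_response.
Qed.
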